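(* Let $C$ and $D$ be $R$-linear codes of length $n$, and let $\tilde C\in\{C,C^\perp\}$ and $\tilde D\in\{D,D^\perp\}$. Then \[ \mathrm{CJ}^{\mathrm{av}}_{\tilde C,\tilde D}(x_{ij}\ \text{with}\ i,j\in K)=\frac{1}{|C|^{\delta(C,\tilde C)}\,|D|^{\delta(D,\tilde D)}}\;\Big(T_R^{\delta(C,\tilde C)}\otimes T_R^{\delta(D,\tilde D)}\Big)\,\mathrm{CJ}^{\mathrm{av}}_{C,D}(x_{ij}). \] Here $\delta(C,\tilde C)=0$ if $\tilde C=C$ and $\delta(C,\tilde C)=1$ if $\tilde C=C^\perp$, and similarly for $\delta(D,\tilde D)$. $T_R^0=I$ and $T_R^1=T_R$.
   Context: $R$ denotes either the finite field $\mathbb F_q$ ($q=p^f$, $p$ prime) or the ring $\mathbb Z_k$ of integers modulo $k\ge2$. The elements of $R$ are listed in a fixed order $0=\omega_0,\omega_1,\dots,\omega_{|R|-1}$, and $K=\{0,1,\dots,|R|-1\}$. An $R$-linear code of length $n$ is an $\mathbb F_q$-subspace of $\mathbb F_q^n$ (if $R=\mathbb F_q$) or an additive subgroup of $\mathbb Z_k^n$ (if $R=\mathbb Z_k$). The inner product is $u\cdot v=\sum_{i=1}^n u_iv_i$, and $C^\perp=\{v\in R^n: u\cdot v=0\ \forall u\in C\}$. For $u,v\in R^n$ and $(\alpha,\beta)\in R^2$, set $\eta_{\alpha\beta}(u,v)=\#\{i: (u_i,v_i)=(\alpha,\beta)\}$. The complete joint weight enumerator is \[ \mathrm{CJE}_{C,D}(x_{ij})=\sum_{u\in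 C,v\in D}\prod_{i,j=0}^{|R|-1}x_{ij}^{\eta_{\omega_i\omega_j}(u,v)}, \] where the $x_{ij}$ are indeterminates. For $\sigma\in S_n$ (the symmetric group on $\{1,\dots,n\}$) and $u\in R^n$, let $u^\sigma=(u_{\sigma(1)},\dots,u_{\sigma(n)})$ and $C^\sigma=\{u^\sigma:u\in C\}$. The average complete joint weight enumerator is \[ \mathrm{CJ}^{\mathrm{av}}_{C,D}(x_{ij})=\frac1{n!}\sum_{\sigma\in S_n}\mathrm{CJE}_{C^\sigma,D}(x_{ij}). \] The character $\chi:R\to\mathbb C^\times$ is defined as follows. - If $R=\mathbb Z_k$, then $\chi(\alpha)=e^{2\pi i\alpha/k}$. - If $R=\mathbb F_q$, fix a root $\lambda$ of a primitive irreducible polynomial of degree $f$ over $\mathbb F_p$, and write $\alpha=\alpha_0+\alpha_1\lambda+\dots+\alpha_{f-1}\lambda^{f-1}$ with $\alpha_i\in\mathbb F_p$. Then $\chi(\alpha)=e^{2\pi i\alpha_0/p}$. $T_R=(\chi(\omega_a\omega_b))_{a,b\in K}$. For matrices $A,B$ indexed by $K$, the operator $A\otimes B$ acts on a polynomial in the $x_{ij}$ by the substitution \[ x_{ij}\mapsto\sum_{k,l\in K}A_{ik}B_{jl}\,x_{kl}. \] *)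

From HB Require Import structures.
From mathcomp Require Import all_boot all_order all_algebra all_fingroup all_field.
From mathcomp Require Import mpoly.
Set Implicit Arguments. Unset Strict Implicit. Unset Printing Implicit Defensive.
Import Order.TTheory GRing.Theory Num.Theory.
Local Open Scope ring_scope.

(* e^{2 pi i / k} in algC: k.-root (-1) is the k-th root of -1 of minimal
   nonnegative argument, i.e. e^{i pi / k}; its square is e^{2 pi i / k}. *)
Definition zeta (k : nat) : algC := (k.-root (-1)) ^+ 2.

Section CJE.
Variables (R : finComNzRingType) (n : nat).

Definition word := {ffun 'I_n -> R}.

Definition zero_word : word := [ffun => 0].
Definition add_word (u v : word) : word := [ffun i => u i + v i].
Definition opp_word (u : word) : word := [ffun i => - u i].
Definition scale_word (a : R) (u : word) : word := [ffun i => a * u i].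

Definition additive_code (C : {set word}) : Prop :=
  zero_word \in C /\ (forall u v, u \in C -> v \in C -> add_word u v \in C)
  /\ (forall u, u \in C -> opp_word u \in C).

Definition linear_code (C : {set word}) : Prop :=
  zero_word \in C /\ (forall u v, u \in C -> v \in C -> add_word u v \in C)
  /\ (forall a u, u \in C -> scale_word a u \in C).

Definition dotp (u v : word) : R := \sum_(i < n) u i * v i.

Definition dual (C : {set word}) : {set word} :=
  [set v | [forall u in C, dotp u v == 0]].

Definition eta (a b : R) (u v : word) : nat :=
  #|[set i : 'I_n | (u i == a) && (v i == b)]|.

Definition NV := #|{: R * R}|.
Definition xv (a b : R) : {mpoly algC[NV]} := 'X_(enum_rank (a, b)).

Definition CJE (C D : {set word}) : {mpoly algC[NV]} :=
  \sum_(u in C) \sum_(v in D) \prod_(ab : R * R) xv ab.1 ab.2 ^+ eta ab.1 ab.2 u v.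

Definition permw (s : 'S_n) (u : word) : word := [ffun i => u (s i)].
Definition permC (s : 'S_n) (C : {set word}) : {set word} := [set permw s u | u in C].

Definition CJav (C D : {set word}) : {mpoly algC[NV]} :=
  (n`!%:R)^-1 *: \sum_(s : 'S_n) CJE (permC s C) D.

(* A (x) B : x_{ab} |-> sum_{c,d} A_{ac} B_{bd} x_{cd} *)
Definition tensop (A B : R -> R -> algC) (P : {mpoly algC[NV]}) : {mpoly algC[NV]} :=
  P \mPo [tuple \sum_(cd : R * R)
            (A (enum_val r).1 cd.1 * B (enum_val r).2 cd.2) *: xv cd.1 cd.2 | r < NV].

Definition Tpow (chi : R -> algC) (d : bool) : R -> R -> algC :=
  fun a b => if d then chi (a * b) else (a == b)%:R.

(* tilde C = C if d = false (delta = 0), C^perp if d = true (delta = 1) *)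
Definition tilde (d : bool) (C : {set word}) : {set word} := if d then dual C else C.

End CJE.

Unset Implicit Arguments.
Definition chiZ (k : nat) (a : 'Z_k) : algC := zeta k ^+ (a : nat).

Definition toF (p : nat) (F : finFieldType) (a : 'F_p) : F := (a : nat)%:R.

(* primitive polynomial of degree f over F_p: irreducible, degree f, and
   the order of X modulo P is p^f - 1 *)
Definition primitive_Fp_poly (p f : nat) (P : {poly 'F_p}) : Prop :=
  irreducible_poly P /\ size P = f.+1 /\
  P %| 'X^(p ^ f - 1) - 1 /\
  (forall m : nat, (0 < m)%N -> (m < p ^ f - 1)%N -> ~~ (P %| 'X^m - 1)).

From Pilot Require Import Defs.
From HB Require Import structures.
From mathcomp Require Import all_boot all_order all_algebra all_fingroup all_field.
From mathcomp Require Import mpoly.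
From mathcomp Require Import ring.
Set Implicit Arguments. Unset Strict Implicit. Unset Printing Implicit Defensive.
Import Order.TTheory GRing.Theory Num.Theory.
Local Open Scope ring_scope.

(* The substitution A (x) B sends the monomial prod_l x_{u_l v_l} of a pair of
   words to sum_{w,z} (prod_l A(u_l,w_l) B(v_l,z_l)) prod_l x_{w_l z_l}.  For
   A = T_R^delta, summing over u in C turns prod_l A(u_l,w_l) into a character
   sum over C, which equals |C| [w in C^perp] as soon as chi is an additive
   character separating the dual of C ("orthogonality").  This gives the
   identity for CJE(C, D); it transfers to every pair (C^sigma, D) because
   orthogonality and duality commute with coordinate permutations, and
   averaging over sigma yields the identity for the average enumerator.

   It remains to check orthogonality for the two characters of the theorem.
   On Z_k, chi(a) = zeta^a with zeta = (k.-root (-1))^2, which we show to be a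
   primitive k-th root of unity (a Parseval argument on the unit circle), so
   chi is faithful.  On F_q, chi is additive because lambda generates F_q over
   F_p with coordinates (1, lambda, ..., lambda^(f-1)), and it is nontrivial
   (chi 1 = zeta_p != 1), so rescaling codewords makes it separate linear codes. *)

Section Substitution.
Variables (R : finComNzRingType) (n : nat).
Local Notation word := (word R n).
Local Notation poly := {mpoly algC[NV R]}.

Definition mono (u v : word) : poly :=
  \prod_(ab : R * R) xv ab.1 ab.2 ^+ Defs.eta ab.1 ab.2 u v.

(* Grouping the coordinates l by the value of (u l, v l). *)
Lemma monoE (u v : word) : mono u v = \prod_(l < n) xv (u l) (v l).
Proof.
rewrite (partition_big (fun l => (u l, v l)) predT) //=.
apply: eq_bigr => [[a b]] _ /=.
rewrite (eq_bigr (fun _ => xv a b)); last by move=> l /eqP [-> ->].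
rewrite -prodr_const /Defs.eta; apply: eq_bigl => l.
by rewrite inE xpair_eqE.
Qed.

Lemma CJE_mono (C D : {set word}) :
  CJE C D = \sum_(u in C) \sum_(v in D) mono u v.
Proof. by []. Qed.

(* The weight with which the substitution A sends coordinatewise u to w. *)
Definition wt (A : R -> R -> algC) (u w : word) : algC :=
  \prod_(l < n) A (u l) (w l).

Variables (A B : R -> R -> algC).

Lemma tensop_xv (a b : R) :
  tensop A B (xv a b) = \sum_(cd : R * R) (A a cd.1 * B b cd.2) *: xv cd.1 cd.2.
Proof. by rewrite /tensop /xv comp_mpolyXU -tnth_nth tnth_mktuple enum_rankK. Qed.

Lemma tensop_sum (I : finType) (P : pred I) (F : I -> poly) :
  tensop A B (\sum_(i | P i) F i) = \sum_(i | P i) tensop A B (F i).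
Proof. exact: raddf_sum. Qed.

Lemma tensopZ (c : algC) (P : poly) : tensop A B (c *: P) = c *: tensop A B P.
Proof. exact: comp_mpolyZ. Qed.

Lemma tensop_mono (u v : word) :
  tensop A B (mono u v) =
  \sum_(w : word) \sum_(z : word) (wt A u w * wt B v z) *: mono w z.
Proof.
rewrite monoE /tensop rmorph_prod /=.
under eq_bigr => l _ do rewrite -/(tensop A B _) tensop_xv.
rewrite bigA_distr_bigA /= pair_big /=.
pose split_ff (f : {ffun 'I_n -> R * R}) : word * word :=
  ([ffun l => (f l).1], [ffun l => (f l).2]).
pose pair_ff (p : word * word) : {ffun 'I_n -> R * R} := [ffun l => (p.1 l, p.2 l)].
rewrite (reindex split_ff) /=; last first.
  exists pair_ff => [f _|[w z] _].
    by apply/ffunP => l; rewrite !ffunE /= -surjective_pairing.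
  by congr pair; apply/ffunP => l; rewrite !ffunE.
apply: eq_bigr => f _; rewrite scaler_prod monoE /wt -big_split /=.
by congr (_ *: _); apply: eq_bigr => l _; rewrite !ffunE.
Qed.

End Substitution.

Section MacWilliams.
Variables (R : finComNzRingType) (n : nat) (chi : R -> algC).
Local Notation word := (word R n).

Lemma wt_Tpow0 (u w : word) : wt (Tpow chi false) u w = (u == w)%:R.
Proof.
rewrite /wt /Tpow; have [->|neq_uw] := eqVneq u w.
  by rewrite big1 // => l _; rewrite eqxx.
have [l neq_l] : exists l, u l != w l.
  by apply/existsP; apply: contraNT neq_uw => /existsPn eq_uw;
    apply/eqP/ffunP => l; apply/eqP; rewrite -[_ == _]negbK.
by rewrite (bigD1 l) //= (negbTE neq_l) mul0r.
Qed.

(* The character sums of C detect its dual: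
   sum_{u in C} chi(u . w) = |C| [w in C^perp], with chi(u . w) written
   coordinatewise as the weight of T_R^1. *)
Definition orthogonality (C : {set word}) : Prop :=
  forall w : word, \sum_(u in C) wt (Tpow chi true) u w = #|C|%:R * (w \in dual C)%:R.

Lemma sum_wt_Tpow (d : bool) (C : {set word}) (w : word) : orthogonality C ->
  \sum_(u in C) wt (Tpow chi d) u w = (#|C| ^ d)%N%:R * (w \in tilde d C)%:R.
Proof.
case: d => [|_]; first by rewrite expn1 => ->.
rewrite expn0 mul1r /tilde (eq_bigr (fun u => (u == w)%:R)) => [|u _]; last first.
  exact: wt_Tpow0.
have [wC|wNC] := boolP (w \in C).
  by rewrite (bigD1 w) //= eqxx big1 ?addr0 // => u /andP[_ /negbTE ->].
by rewrite big1 // => u uC; case: eqP wNC => // <-; rewrite uC.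
Qed.

Lemma tensop_CJE (dC dD : bool) (C D : {set word}) :
  orthogonality C -> orthogonality D ->
  tensop (Tpow chi dC) (Tpow chi dD) (CJE C D) =
  (#|C| ^ dC * #|D| ^ dD)%N%:R *: CJE (tilde dC C) (tilde dD D).
Proof.
move=> orthC orthD; rewrite !CJE_mono tensop_sum.
under eq_bigr => u _ do rewrite tensop_sum.
under eq_bigr => u _ do under eq_bigr => v _ do rewrite tensop_mono.
have regroup : forall (F : word -> word -> algC) (G : word -> word -> algC),
    \sum_(u in C) \sum_(v in D) \sum_(w : word) \sum_(z : word) (F u w * G v z) *: mono w z =
    \sum_(w : word) \sum_(z : word) ((\sum_(u in C) F u w) * (\sum_(v in D) G v z)) *: mono w z.
  move=> F G.
  have distr w z : ((\sum_(u in C) F u w) * (\sum_(v in D) G v z)) *: mono w z =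
      \sum_(u in C) \sum_(v in D) (F u w * G v z) *: mono w z.
    by rewrite mulr_suml scaler_suml; apply: eq_bigr => u _; rewrite mulr_sumr scaler_suml.
  under [RHS]eq_bigr => w _ do under eq_bigr => z _ do rewrite distr.
  rewrite pair_big; under eq_bigr => p _ do rewrite pair_big.
  rewrite [RHS]pair_big; under [RHS]eq_bigr => q _ do rewrite pair_big.
  exact: exchange_big.
rewrite regroup scaler_sumr [RHS]big_mkcond /=; apply: eq_big => // w _.
rewrite sum_wt_Tpow //; case: (w \in _); last first.
  by rewrite big1 // => z _; rewrite mulr0 mul0r scale0r.
rewrite scaler_sumr [RHS]big_mkcond /=; apply: eq_big => // z _.
rewrite sum_wt_Tpow // mulr1 natrM; case: (z \in _); last by rewrite !mulr0 scale0r.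
by rewrite mulr1.
Qed.

End MacWilliams.

Section Average.
Variables (R : finComNzRingType) (n : nat) (chi : R -> algC).
Local Notation word := (word R n).

Lemma permwK (s : 'S_n) : cancel (@permw R n s) (permw s^-1).
Proof. by move=> u; apply/ffunP => l; rewrite !ffunE permKV. Qed.

Lemma permwKV (s : 'S_n) : cancel (@permw R n s^-1) (permw s).
Proof. by move=> u; apply/ffunP => l; rewrite !ffunE permK. Qed.

Lemma mem_permC (s : 'S_n) (X : {set word}) (v : word) :
  (v \in permC s X) = (permw s^-1 v \in X).
Proof.
apply/imsetP/idP => [[u uX ->] | vX]; first by rewrite permwK.
by exists (permw s^-1 v) => //; rewrite permwKV.
Qed.

Lemma card_permC (s : 'S_n) (X : {set word}) : #|permC s X| = #|X|.
Proof. exact/card_imset/(can_inj (permwK s)). Qed.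

Lemma wt_permw (A : R -> R -> algC) (s : 'S_n) (u w : word) :
  wt A (permw s u) w = wt A u (permw s^-1 w).
Proof.
rewrite /wt (reindex_inj (@perm_inj _ s^-1)) /=.
by apply: eq_bigr => l _; rewrite !ffunE permKV.
Qed.

Lemma dotp_permw (s : 'S_n) (u v : word) : dotp (permw s u) v = dotp u (permw s^-1 v).
Proof.
rewrite /dotp (reindex_inj (@perm_inj _ s^-1)) /=.
by apply: eq_bigr => l _; rewrite !ffunE permKV.
Qed.

Lemma dual_permC (s : 'S_n) (X : {set word}) : dual (permC s X) = permC s (dual X).
Proof.
apply/setP => v; rewrite mem_permC !inE.
apply/forall_inP/forall_inP => orth_v u uX.
  by rewrite -dotp_permw; apply: orth_v; rewrite mem_permC permwK.
by rewrite mem_permC in uX; rewrite -[u](permwKV s) dotp_permw; apply: orth_v.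
Qed.

Lemma tilde_permC (d : bool) (s : 'S_n) (X : {set word}) :
  tilde d (permC s X) = permC s (tilde d X).
Proof. by case: d; rewrite /tilde ?dual_permC. Qed.

Lemma orthogonality_permC (s : 'S_n) (C : {set word}) :
  orthogonality chi C -> orthogonality chi (permC s C).
Proof.
move=> orthC w; rewrite big_imset /=; last exact: in2W (can_inj (permwK s)).
under eq_bigr => u _ do rewrite wt_permw.
by rewrite orthC card_permC dual_permC mem_permC.
Qed.

Lemma tensop_CJav (dC dD : bool) (C D : {set word}) :
  (0 < #|C|)%N -> (0 < #|D|)%N -> orthogonality chi C -> orthogonality chi D ->
  CJav (tilde dC C) (tilde dD D) =
  ((#|C| ^ dC * #|D| ^ dD)%N%:R)^-1 *: tensop (Tpow chi dC) (Tpow chi dD) (CJav C D).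
Proof.
move=> C_gt0 D_gt0 orthC orthD; rewrite /CJav tensopZ tensop_sum.
set c := (#|C| ^ dC * #|D| ^ dD)%N%:R.
have -> : \sum_(s : 'S_n) tensop (Tpow chi dC) (Tpow chi dD) (CJE (permC s C) D) =
          c *: \sum_(s : 'S_n) CJE (permC s (tilde dC C)) (tilde dD D).
  rewrite scaler_sumr; apply: eq_bigr => s _.
  rewrite tensop_CJE ?card_permC ?tilde_permC //; exact: orthogonality_permC.
rewrite !scalerA mulrAC mulVf ?mul1r //.
by rewrite pnatr_eq0 -lt0n muln_gt0 !expn_gt0 C_gt0 D_gt0.
Qed.

End Average.

Section Characters.
Variables (R : finComNzRingType) (n : nat) (chi : R -> algC).
Hypotheses (chiD : forall a b, chi (a + b) = chi a * chi b) (chi0 : chi 0 = 1).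
Local Notation word := (word R n).

Lemma dotpDl (u0 u w : word) : dotp (add_word u0 u) w = dotp u0 w + dotp u w.
Proof. by rewrite /dotp -big_split; apply: eq_bigr => l _; rewrite ffunE mulrDl. Qed.

Definition separates (C : {set word}) : Prop :=
  forall w, w \notin dual C -> exists2 u, u \in C & chi (dotp u w) != 1.

(* Character sum over an additive code: the sum is |C| on the dual, and it is
   invariant under translation by a u0 with chi (u0 . w) != 1, hence 0 off it. *)
Lemma orthogonality_code (C : {set word}) :
  additive_code C -> separates C -> orthogonality chi C.
Proof.
move=> [C0 [CD CN]] sepC w.
have wtE u : wt (Tpow chi true) u w = chi (dotp u w).
  by rewrite /wt /Tpow /dotp (big_morph chi chiD chi0).
under eq_bigr => u _ do rewrite wtE.
have [wC|wNC] := boolP (w \in dual C).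
  rewrite mulr1 -sumr_const; apply: eq_bigr => u uC.
  by move: wC; rewrite inE => /forall_inP /(_ u uC) /eqP ->.
rewrite mulr0; have [u0 u0C chi_u0] := sepC w wNC.
set S := \sum_(u in C) _.
have add_u0K : cancel (add_word u0) (add_word (opp_word u0)).
  by move=> u; apply/ffunP => l; rewrite !ffunE addKr.
have S_fixed : S = chi (dotp u0 w) * S.
  rewrite {1}/S (reindex_inj (can_inj add_u0K)) /= mulr_sumr.
  apply: eq_big => [u|u _]; last by rewrite dotpDl chiD.
  apply/idP/idP => [|uC]; last exact: CD.
  by rewrite -{2}(add_u0K u) => /(CD _ _ (CN _ u0C)).
apply/eqP; move/eqP: S_fixed; rewrite -subr_eq0 -{1}(mul1r S) -mulrBl.
by rewrite mulf_eq0 subr_eq0 eq_sym (negbTE chi_u0).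
Qed.

End Characters.

Lemma card_code_gt0 (R : finComNzRingType) (n : nat) (C : {set word R n}) :
  additive_code C -> (0 < #|C|)%N.
Proof. by move=> [C0 _]; apply/card_gt0P; exists (zero_word R n). Qed.

Lemma not_dual (R : finComNzRingType) (n : nat) (C : {set word R n}) (w : word R n) :
  w \notin dual C -> exists2 u, u \in C & dotp u w != 0.
Proof. by rewrite inE => /forall_inPn [u uC ne0]; exists u. Qed.

Lemma sum_expr_unity (F : idomainType) (x : F) (N : nat) :
  x ^+ N = 1 -> \sum_(i < N) x ^+ i = (N * (x == 1))%:R.
Proof.
move=> xN; have [->|x_neq1] := eqVneq x 1.
  by rewrite muln1 (eq_bigr (fun _ => 1)) ?sumr_const ?card_ord // => i _; rewrite expr1n.
have /esym/eqP := subrX1 x N; rewrite xN subrr mulf_eq0 subr_eq0 (negbTE x_neq1).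
by rewrite muln0 => /eqP.
Qed.

Lemma norm_unity (y : algC) (N : nat) : (0 < N)%N -> y ^+ N = 1 -> `|y| = 1.
Proof.
move=> N_gt0 yN; have /eqP : `|y| ^+ N = 1 by rewrite -normrX yN normr1.
by rewrite pexpr_eq1 // => /eqP.
Qed.

Lemma conj_unit (y : algC) : `|y| = 1 -> y^* = y^-1.
Proof. by move=> y1; rewrite invC_norm y1 expr1n invr1 mul1r. Qed.

Lemma norm_subr1_unit (y : algC) : `|y| = 1 -> `|y - 1| ^+ 2 = 2 - 'Re y *+ 2.
Proof.
move=> y1; have yy : y * y^* = 1 by rewrite -normCK y1 expr1n.
rewrite normCK rmorphB rmorph1 ReE mulrBl !mulrBr yy !mul1r mulr1.
by field.
Qed.

(* Parseval's identity for the discrete Fourier transform of (s^j)_{j<t},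
   s on the unit circle: the squared values of the geometric sums at the t
   points s z^i (z a primitive t-th root of unity) add up to t^2. *)
Lemma parseval_geometric (t : nat) (s z : algC) :
  t.-primitive_root z -> `|s| = 1 ->
  \sum_(i < t) `|\sum_(j < t) (s * z ^+ i) ^+ j| ^+ 2 = (t * t)%:R.
Proof.
move=> z_prim s1; have t_gt0 := prim_order_gt0 z_prim.
have z1 : `|z| = 1 := norm_unity t_gt0 (prim_expr_order z_prim).
have unit_pt i : `|s * z ^+ i| = 1 by rewrite normrM normrX z1 s1 expr1n mulr1.
have expand i : `|\sum_(j < t) (s * z ^+ i) ^+ j| ^+ 2 =
    \sum_(j < t) \sum_(l < t) (s ^+ j / s ^+ l) * (z ^+ j / z ^+ l) ^+ i.
  rewrite normCK rmorph_sum mulr_suml; apply: eq_bigr => j _.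
  rewrite mulr_sumr; apply: eq_bigr => l _.
  rewrite rmorphXn /= conj_unit // !exprMn !exprVn exprMn invfM -!exprM.
  by rewrite (mulnC i j) (mulnC i l); ring.
under eq_bigr => i _ do rewrite expand.
rewrite exchange_big /= (eq_bigr (fun _ => t%:R)) => [|j _].
  by rewrite sumr_const card_ord -mulrnA.
have s_neq0 : s ^+ j != 0 by rewrite expf_neq0 // -normr_gt0 s1.
have z_neq0 m : z ^+ m != 0 by rewrite expf_neq0 // -normr_gt0 z1.
rewrite exchange_big /= (bigD1 j) //= [X in _ + X]big1 => [|l ne_lj]; last first.
  rewrite -mulr_sumr sum_expr_unity; last first.
    by rewrite expr_div_n -!exprM !(mulnC _ t) !exprM (prim_expr_order z_prim) !expr1n divr1.
  rewrite -(inj_eq (mulIf (z_neq0 l))) divfK // mul1r (eq_prim_root_expr z_prim).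
  rewrite !modn_small ?ltn_ord //.
  by move: ne_lj; rewrite -val_eqE eq_sym => /negbTE ->; rewrite muln0 mulr0.
by rewrite addr0 -mulr_sumr !divff // sum_expr_unity ?expr1n // eqxx muln1 mul1r.
Qed.

(* Every point r != 1 of the unit circle has a t-th root (t >= 2) strictly
   closer to 1.  Otherwise all t-th roots y_i = s z^i satisfy |1 - y_i| >= |1 - r|;
   as (1 - y_i) (sum_{j<t} y_i^j) = 1 - r, each geometric sum has modulus
   at most 1, so their squares add up to at most t < t^2, against Parseval. *)
Lemma closer_root (r : algC) (t : nat) : `|r| = 1 -> r != 1 -> (1 < t)%N ->
  exists2 y, y ^+ t = r & 'Re r < 'Re y.
Proof.
move=> r1 r_neq1 t_gt1; have t_gt0 := ltnW t_gt1.
have [z z_prim] := C_prim_root_exists t_gt0.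
set s := t.-root r; have s_t : s ^+ t = r by rewrite rootCK.
have s1 : `|s| = 1 by rewrite norm_rootC r1 rootC1.
pose y (i : 'I_t) := s * z ^+ i.
have y_t i : y i ^+ t = r.
  by rewrite exprMn exprAC (prim_expr_order z_prim) expr1n mulr1 s_t.
have z1 : `|z| = 1 := norm_unity t_gt0 (prim_expr_order z_prim).
have y1 i : `|y i| = 1 by rewrite normrM normrX z1 s1 expr1n mulr1.
case: (pickP (fun i => 'Re r < 'Re (y i))) => [i lt_ri | le_yr]; first by exists (y i).
have r_far : 0 < `|r - 1| ^+ 2 by rewrite exprn_gt0 // normr_gt0 subr_eq0.
have geom_le1 i : `|\sum_(j < t) y i ^+ j| ^+ 2 <= 1.
  have geomE : `|\sum_(j < t) y i ^+ j| ^+ 2 * `|y i - 1| ^+ 2 = `|r - 1| ^+ 2.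
    by rewrite -exprMn -normrM mulrC -subrX1 y_t.
  have far_i : `|r - 1| ^+ 2 <= `|y i - 1| ^+ 2.
    rewrite !norm_subr1_unit // lerD2l lerN2 lerMn2r /= real_leNgt ?Creal_Re //.
    by rewrite le_yr.
  by rewrite -(ger_pMl _ (lt_le_trans r_far far_i)) geomE.
have /eqP := parseval_geometric z_prim s1; rewrite lt_eqF //.
apply: (le_lt_trans (ler_sum _ (fun i _ => geom_le1 i))).
by rewrite sumr_const card_ord ltr_nat ltn_Pmull.
Qed.

(* The root
   r = k.-root (-1) has the largest real part among the k-th roots of -1;
   if r^2 had order e < k, then r^e = -1 and some (k/e)-th root of r would be a
   k-th root of -1 closer to 1 than r. *)
Lemma zeta_prim (k : nat) : (1 < k)%N -> k.-primitive_root (zeta k).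
Proof.
move=> k_gt1; have k_gt0 := ltnW k_gt1.
pose r : algC := k.-root (-1); have zetaE : zeta k = r ^+ 2 by [].
have r_k : r ^+ k = -1 by rewrite rootCK.
have r1 : `|r| = 1 by rewrite norm_rootC normrN1 rootC1.
have N1_neq1 : (-1 : algC) != 1 by rewrite lt_eqF // (lt_trans (ltrN10 _)).
have Re_max y : y ^+ k = -1 -> 'Re y <= 'Re r.
  move=> y_k; have [Im_ge0|Im_lt0] := boolP (0 <= 'Im y); first exact: rootC_Re_max.
  rewrite -Re_conj; apply: rootC_Re_max => //; first by rewrite -rmorphXn y_k rmorphN1.
  by rewrite Im_conj oppr_ge0 ltW // real_ltNge ?Creal_Im.
have zeta_k : zeta k ^+ k = 1 by rewrite zetaE exprAC r_k sqrrN expr1n.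
have [e e_prim e_dvd_k] := prim_order_exists k_gt0 zeta_k.
have [e_eq_k|e_neq_k] := eqVneq e k; first by rewrite e_eq_k in e_prim.
exfalso.
have e_lt_k : (e < k)%N by rewrite ltn_neqAle e_neq_k dvdn_leq.
have r_e : r ^+ e = -1.
  have /eqP : (r ^+ e) ^+ 2 = 1 by rewrite exprAC -zetaE prim_expr_order.
  rewrite sqrf_eq1 => /orP[/eqP r_e1|/eqP //].
  move: r_k; rewrite -(divnK e_dvd_k) mulnC exprM r_e1 expr1n => /eqP.
  by rewrite eq_sym (negbTE N1_neq1).
have r_neq1 : r != 1.
  by apply: contra_eq_neq r_k => ->; rewrite expr1n eq_sym.
have t_gt1 : (1 < k %/ e)%N by rewrite ltn_divRL // mul1n.
have [y y_t lt_ry] := closer_root r1 r_neq1 t_gt1.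
have y_k : y ^+ k = -1 by rewrite -(divnK e_dvd_k) exprM y_t r_e.
by have := Re_max y y_k; rewrite real_leNgt ?Creal_Re // lt_ry.
Qed.

Lemma ltn_Zp (k : nat) (a : 'Z_k) : (1 < k)%N -> (a < k)%N.
Proof. by case: k a => [|[|k]] a //= _; exact: ltn_ord. Qed.

Lemma expr_Zp_add (S : pzSemiRingType) (k : nat) (z : S) (a b : 'Z_k) :
  (1 < k)%N -> z ^+ k = 1 -> z ^+ ((a + b)%R : 'Z_k) = z ^+ a * z ^+ b.
Proof.
move=> k_gt1 z_k; have -> : a + b = ((a + b)%N)%:R :> 'Z_k by rewrite natrD !natr_Zp.
by rewrite val_Zp_nat // expr_mod // exprD.
Qed.

Section Zk.
Variable k : nat.
Hypothesis k_gt1 : (1 < k)%N.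

Lemma chiZD (a b : 'Z_k) : chiZ k (a + b) = chiZ k a * chiZ k b.
Proof. exact/expr_Zp_add/prim_expr_order/zeta_prim. Qed.

Lemma chiZ0 : chiZ k 0 = 1.
Proof. exact: expr0. Qed.

(* chiZ k is faithful: zeta k has order exactly k. *)
Lemma chiZ_eq1 (a : 'Z_k) : (chiZ k a == 1) = (a == 0).
Proof.
by rewrite /chiZ -(prim_order_dvd (zeta_prim k_gt1)) /dvdn modn_small ?ltn_Zp.
Qed.

Lemma separates_Zk (n : nat) (C : {set word 'Z_k n}) : separates (chiZ k) C.
Proof. by move=> w /not_dual[u uC dot_neq0]; exists u; rewrite // chiZ_eq1. Qed.

Lemma orthogonality_Zk (n : nat) (C : {set word 'Z_k n}) :
  additive_code C -> orthogonality (chiZ k) C.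
Proof.
move=> C_add; apply: orthogonality_code;
  [exact: chiZD | exact: chiZ0 | exact: C_add | exact: separates_Zk].
Qed.

End Zk.

(* Linear codes are additive: the opposite is scaling by -1. *)
Lemma linear_additive (R : finComNzRingType) (n : nat) (C : {set word R n}) :
  linear_code C -> additive_code C.
Proof.
move=> [C0 [CD CZ]]; split=> //; split=> // u uC.
have -> : opp_word u = scale_word (-1) u by apply/ffunP => l; rewrite !ffunE mulN1r.
exact: CZ.
Qed.

Lemma dotpZl (R : finComNzRingType) (n : nat) (a : R) (u w : word R n) :
  dotp (scale_word a u) w = a * dotp u w.
Proof. by rewrite /dotp mulr_sumr; apply: eq_bigr => l _; rewrite ffunE mulrA. Qed.

(* Over a field any nontrivial character separates linear codes: rescale a
   codeword u with u . w != 0 so that u . w hits a value c with chi c != 1. *)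
Lemma separates_linear (K : finFieldType) (n : nat) (chi : K -> algC) (c : K)
    (C : {set word K n}) :
  chi c != 1 -> linear_code C -> separates chi C.
Proof.
move=> chi_c [_ [_ CZ]] w /not_dual[u uC dot_neq0].
by exists (scale_word (c / dotp u w) u); rewrite ?dotpZl ?divfK //; apply: CZ.
Qed.

Lemma irredp_coprime (K : fieldType) (P Q : {poly K}) :
  irreducible_poly P -> Q != 0 -> (size Q < size P)%N -> coprimep P Q.
Proof.
move=> P_irr Q_neq0 small_Q; rewrite /coprimep; apply: contraT => gcd_n1.
have /eqp_dvdl gcd_P := P_irr _ gcd_n1 (dvdp_gcdl P Q).
have := dvdp_gcdr P Q; rewrite gcd_P => /(dvdp_leq Q_neq0).
by rewrite leqNgt small_Q.
Qed.

Section PrimeField.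
Variables (F : finFieldType) (p : nat).
Hypotheses (p_prime : prime p) (pF : p \in [pchar F]).

Lemma toF_nat (m : nat) : toF p F m%:R = m%:R.
Proof. by rewrite /toF val_Fp_nat // (GRing.natr_mod_pchar pF). Qed.

Lemma toFD (a b : 'F_p) : toF p F (a + b) = toF p F a + toF p F b.
Proof. by rewrite -[a]natr_Zp -[b]natr_Zp -natrD !toF_nat natrD. Qed.

Lemma toFM (a b : 'F_p) : toF p F (a * b) = toF p F a * toF p F b.
Proof. by rewrite -[a]natr_Zp -[b]natr_Zp -natrM !toF_nat natrM. Qed.

Lemma toF1 : toF p F 1 = 1.
Proof. exact: toF_nat 1. Qed.

Lemma toF_zmod : GRing.zmod_morphism (toF p F).
Proof. by move=> a b; apply/eqP; rewrite eq_sym subr_eq -toFD subrK. Qed.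

HB.instance Definition _ := GRing.isZmodMorphism.Build 'F_p F (toF p F) toF_zmod.
HB.instance Definition _ := GRing.isMultiplicative.Build 'F_p F (toF p F) (toFM, toF1).

End PrimeField.

Section FiniteField.
Variables (F : finFieldType) (p f : nat) (lambda : F) (chi : F -> algC).
Hypotheses (p_prime : prime p) (pF : p \in [pchar F]) (card_F : #|F| = (p ^ f)%N).
Hypothesis lambda_root :
  exists P : {poly 'F_p}, primitive_Fp_poly p f P /\ root (map_poly (toF p F) P) lambda.
Hypothesis chiE : forall a : nat -> 'F_p,
  chi (\sum_(i < f) toF p F (a i) * lambda ^+ i) = zeta p ^+ (a 0%N : nat).

(* Coordinates of an element of F in the basis 1, lambda, ..., lambda^(f-1). *)
Definition coords := {ffun 'I_f -> 'F_p}.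

Definition ext0 (a : coords) (i : nat) : 'F_p := if insub i is Some j then a j else 0.

Lemma ext0_ord (a : coords) (i : 'I_f) : ext0 a i = a i.
Proof. by rewrite /ext0 valK. Qed.

Definition phi (a : coords) : F := \sum_(i < f) toF p F (a i) * lambda ^+ i.

Lemma phiD (a b : coords) : phi (a + b) = phi a + phi b.
Proof.
rewrite /phi -big_split; apply: eq_bigr => i _.
by rewrite ffunE (toFD p_prime pF) mulrDl.
Qed.

Lemma chi_phi (a : coords) : chi (phi a) = zeta p ^+ (ext0 a 0 : nat).
Proof. by rewrite -chiE /phi; under [in RHS]eq_bigr => i _ do rewrite ext0_ord. Qed.

(* 1, lambda, ..., lambda^(f-1) are independent over 'F_p: a relation would
   give a nonzero polynomial of degree < f with root lambda; it would be
   coprime to the irreducible P of degree f, which also has root lambda. *)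
Lemma phi_eq0 (a : coords) : phi a = 0 -> a = 0.
Proof.
move=> phi_a0; have [P [[P_irr [P_size _]] P_root]] := lambda_root.
pose Q : {poly 'F_p} := \poly_(i < f) ext0 a i.
have Q_root : (map_poly (toF p F) Q).[lambda] = 0.
  rewrite (horner_coef_wide (n := f)); last by rewrite size_map_poly //; exact: size_poly.
  rewrite -[RHS]phi_a0; apply: eq_bigr => i _.
  by rewrite coef_map /= coef_poly ltn_ord ext0_ord.
have [Q0|Q_neq0] := eqVneq Q 0.
  by apply/ffunP => i; rewrite ffunE -(ext0_ord a) -[RHS](coef0 _ i) -Q0 coef_poly ltn_ord.
have := irredp_coprime P_irr Q_neq0; rewrite P_size ltnS size_poly => /(_ isT).
by rewrite -(coprimep_map (toF p F)) => /coprimep_root/(_ P_root); rewrite Q_root eqxx.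
Qed.

Lemma f_gt0 : (0 < f)%N.
Proof.
have : (1 < #|F|)%N by apply/card_gt1P; exists 0, 1; rewrite !inE eq_sym oner_eq0.
by rewrite card_F lt0n; apply: contraTneq => ->.
Qed.

(* phi is a bijection between coordinate vectors and F (both have p^f elements). *)
Lemma phi_bij : bijective phi.
Proof.
apply: inj_card_bij; last by rewrite card_ffun card_Fp // card_ord card_F.
move=> a b phi_ab; apply/eqP; rewrite -subr_eq0; apply/eqP/phi_eq0.
by have := phiD (a - b) b; rewrite subrK phi_ab => /esym/(canRL (addrK _)); rewrite subrr.
Qed.

(* chi is a character of (F, +): through phi, it reads off the constant
   coordinate, and a |-> zeta p ^ a is additive on 'F_p. *)
Lemma chiD (x y : F) : chi (x + y) = chi x * chi y.
Proof.
have [g phiK gK] := phi_bij; rewrite -[x]gK -[y]gK -phiD !chi_phi /ext0.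
rewrite insubT ?f_gt0 // => f0 /=; rewrite ffunE.
apply: expr_Zp_add; first by rewrite pdiv_id // prime_gt1.
by rewrite pdiv_id // prim_expr_order // zeta_prim // prime_gt1.
Qed.

Lemma chi0 : chi 0 = 1.
Proof. by have := chiE (fun=> 0); rewrite big1 // => i _; rewrite rmorph0 // mul0r. Qed.

Lemma chi1_neq1 : chi 1 != 1.
Proof.
have := chiE (fun i => (i == 0%N)%:R); rewrite (bigD1 (Ordinal f_gt0)) //= big1 => [|i].
  rewrite rmorph1 // expr0 mulr1 addr0 => ->.
  rewrite -(prim_order_dvd (zeta_prim (prime_gt1 p_prime))) /= Fp_cast //.
  by rewrite modn_small ?prime_gt1 // dvdn1 gtn_eqF ?prime_gt1.
by move=> ne_i0; rewrite (negbTE (ne_i0 : (i : nat) != 0%N)) rmorph0 // mul0r.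
Qed.

Lemma orthogonality_Fq (n : nat) (C : {set word F n}) :
  linear_code C -> orthogonality chi C.
Proof.
move=> C_lin; apply: orthogonality_code; [exact: chiD | exact: chi0 | |].
  exact: linear_additive.
exact: separates_linear chi1_neq1 C_lin.
Qed.

End FiniteField.

Theorem mainTheorem2 :
  (* R = Z_k, k >= 2, codes = additive subgroups *)
  (forall (k n : nat) (C D : {set word 'Z_k n}) (dC dD : bool),
     (1 < k)%N -> additive_code C -> additive_code D ->
     CJav (tilde dC C) (tilde dD D) =
     ((#|C| ^ dC * #|D| ^ dD)%N%:R)^-1 *:
       tensop (Tpow (@chiZ k) dC) (Tpow (@chiZ k) dD) (CJav C D))
  /\
  (* R = F_q, q = p^f, lambda a root of a primitive irreducible polynomial of
     degree f over F_p, chi(alpha_0 + alpha_1 lambda + ...) = e^{2 pi i alpha_0 / p} *)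
  (forall (F : finFieldType) (p f : nat) (lambda : F) (chi : F -> algC)
          (n : nat) (C D : {set word F n}) (dC dD : bool),
     prime p -> p \in [pchar F] -> #|F| = (p ^ f)%N ->
     (exists P : {poly 'F_p}, primitive_Fp_poly p f P /\ root (map_poly (@toF p F) P) lambda) ->
     (forall a : nat -> 'F_p,
        chi (\sum_(i < f) toF p F (a i) * lambda ^+ i) = zeta p ^+ (a 0%N : nat)) ->
     linear_code C -> linear_code D ->
     CJav (tilde dC C) (tilde dD D) =
     ((#|C| ^ dC * #|D| ^ dD)%N%:R)^-1 *:
       tensop (Tpow chi dC) (Tpow chi dD) (CJav C D)).
Proof.
split.
  move=> k n C D dC dD k_gt1 C_add D_add.
  by apply: tensop_CJav; by [apply: card_code_gt0 | apply: orthogonality_Zk].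
move=> F p f lambda chi n C D dC dD p_prime pF card_F lambda_root chiE C_lin D_lin.
have orth := orthogonality_Fq p_prime pF card_F lambda_root chiE.
by apply: tensop_CJav; by [apply/card_code_gt0/linear_additive | apply: orth].
Qed.
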